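(* Let $\Gamma$ be a geometrically finite Fuchsian group such that $\infty\notin\widehat{\mathbb{R}}_{\mathrm{st}}$, so that the stabilizer $\Gamma_\infty$ of $\infty$ in $\Gamma$ is either trivial or generated by $t_\lambda=\begin{bmatrix}1&\lambda\\0&1\end{bmatrix}$ for some $\lambda>0$. Let $\mathrm{I},\mathrm{J}$ be isometric spheres of $\Gamma$ which are concentric (i.e. have the same Euclidean center). Then $\mathrm{I}=\mathrm{J}$.
   Context: A Fuchsian group is a discrete subgroup of $\mathrm{PSL}_2(\mathbb{R})$, acting on the upper half-plane $\mathbb{H}$ and on $\widehat{\mathbb{R}}=\mathbb{R}\cup\{\infty\}$ by linear fractional transformations. $\Lambda(\Gamma)$ denotes the limit set, and $\widehat{\mathbb{R}}_{\mathrm{st}}$ is $\Lambda(\Gamma)$ with all parabolic fixed points of $\Gamma$ removed. For $g=\begin{bmatrix}a&b\\c&d\end{bmatrix}\in\Gamma\setminus\Gamma_\infty$ (so $c\neq 0$) the isometric sphere of $g$ is $\mathrm{I}(g)=\{z\in\mathbb{H}: |g'(z)|=1\}=\{z\in\mathbb{H}: |z+\tfrac{d}{c}|=\tfrac{1}{|c|}\}$, a Euclidean semicircle with center $-d/c$ and radius $1/|c|$. The isometric spheres of $\Gamma$ are the sets $\mathrm{I}(g)$, $g\in\Gamma\setminus\Gamma_\infty$. *)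

From Stdlib Require Import Reals List.
Open Scope R_scope.

Record mat := Mat { ma : R; mb : R; mc : R; md : R }.

Definition mid : mat := Mat 1 0 0 1.
Definition mneg (g : mat) : mat := Mat (- ma g) (- mb g) (- mc g) (- md g).
Definition mmul (g h : mat) : mat :=
  Mat (ma g * ma h + mb g * mc h) (ma g * mb h + mb g * md h)
      (mc g * ma h + md g * mc h) (mc g * mb h + md g * md h).
Definition mdet (g : mat) : R := ma g * md g - mb g * mc g.
(* inverse of a determinant-one matrix *)
Definition minv (g : mat) : mat := Mat (md g) (- mb g) (- mc g) (ma g).

(* A subgroup of PSL_2(R) is represented by its full preimage in SL_2(R):
   a set of determinant-one matrices, closed under products, inverses and
   negation, containing the identity. *)
Definition SL2_preimage_subgroup (G : mat -> Prop) : Prop :=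
  G mid /\
  (forall g, G g -> mdet g = 1) /\
  (forall g h, G g -> G h -> G (mmul g h)) /\
  (forall g, G g -> G (minv g)) /\
  (forall g, G g -> G (mneg g)).

Definition discrete (G : mat -> Prop) : Prop :=
  exists eps, 0 < eps /\
    forall g, G g ->
      Rabs (ma g - 1) < eps -> Rabs (mb g) < eps ->
      Rabs (mc g) < eps -> Rabs (md g - 1) < eps -> g = mid.

Definition Fuchsian (G : mat -> Prop) : Prop :=
  SL2_preimage_subgroup G /\ discrete G.

(* Points of the upper half-plane: pairs (x, y) standing for x + i y, y > 0. *)
Definition inH (z : R * R) : Prop := 0 < snd z.

(* Linear fractional action on the upper half-plane (for det g = 1):
   (a z + b)/(c z + d) with z = x + i y. *)
Definition act (g : mat) (z : R * R) : R * R :=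
  let x := fst z in let y := snd z in
  let N := (mc g * x + md g) ^ 2 + (mc g * y) ^ 2 in
  (((ma g * x + mb g) * (mc g * x + md g) + ma g * mc g * y ^ 2) / N,
   mdet g * y / N).

(* Points of the extended real line R-hat = R u {oo}. *)
Inductive bpt := Fin (x : R) | Inf.

(* g fixes the boundary point p (g . p = p); for Fin x this is the
   cleared-denominator form of (a x + b)/(c x + d) = x. *)
Definition fixes (g : mat) (p : bpt) : Prop :=
  match p with
  | Inf => mc g = 0
  | Fin x => mc g * x ^ 2 + (md g - ma g) * x - mb g = 0
  end.

Definition conv_to (u : nat -> R * R) (p : bpt) : Prop :=
  match p with
  | Fin x => forall eps, 0 < eps -> exists N, forall n, (N <= n)%nat ->
               Rabs (fst (u n) - x) < eps /\ Rabs (snd (u n)) < eps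
  | Inf => forall M, exists N, forall n, (N <= n)%nat ->
               M < (fst (u n)) ^ 2 + (snd (u n)) ^ 2
  end.

Definition ipt : R * R := (0, 1).

(* limit set: accumulation points in R-hat of the orbit of i *)
Definition limit_set (G : mat -> Prop) (p : bpt) : Prop :=
  exists gs : nat -> mat, (forall n, G (gs n)) /\
    conv_to (fun n => act (gs n) ipt) p.

Definition parabolic (g : mat) : Prop :=
  g <> mid /\ g <> mneg mid /\ Rabs (ma g + md g) = 2.

Definition parabolic_fixed_point (G : mat -> Prop) (p : bpt) : Prop :=
  exists g, G g /\ parabolic g /\ fixes g p.

Definition Rst (G : mat -> Prop) (p : bpt) : Prop :=
  limit_set G p /\ ~ parabolic_fixed_point G p.

Definition cosh_hdist (z w : R * R) : R :=
  1 + ((fst z - fst w) ^ 2 + (snd z - snd w) ^ 2) / (2 * snd z * snd w).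

Definition dirichlet (G : mat -> Prop) (p z : R * R) : Prop :=
  inH z /\ forall g, G g -> cosh_hdist z p <= cosh_hdist z (act g p).

(* Geometric finiteness: some Dirichlet region (centred at a point with
   trivial stabilizer in PSL_2) has finitely many sides, i.e. is cut out by
   finitely many of its defining half-planes. *)
Definition geometrically_finite (G : mat -> Prop) : Prop :=
  exists p, inH p /\
    (forall g, G g -> act g p = p -> g = mid \/ g = mneg mid) /\
    exists F : list mat, (forall g, In g F -> G g) /\
      forall z, dirichlet G p z <->
        (inH z /\ forall g, In g F -> cosh_hdist z p <= cosh_hdist z (act g p)).

(* Isometric sphere of g (with c <> 0): semicircle of centre -d/c, radius 1/|c| *)
Definition isom_center (g : mat) : R := - md g / mc g.
Definition isom_sphere (g : mat) (z : R * R) : Prop :=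
  inH z /\ (fst z - isom_center g) ^ 2 + snd z ^ 2 = (1 / Rabs (mc g)) ^ 2.

(* If I(g) and I(h) are concentric, then f = h g^-1 fixes oo and |c_h| = |d_f| |c_g|,
   so it suffices to show |d_f| = 1.  Otherwise f or f^-1 is a hyperbolic element
   z |-> a^2 z + ab fixing oo with |a| > 1.  Its powers push i to oo, so oo is a limit
   point; and conjugating a translation of G by its n-th power multiplies the
   translation length by d^(2n) -> 0, so by discreteness oo is not a parabolic fixed
   point.  Thus oo lies in R_st, against the hypothesis. *)
From Stdlib Require Import Reals List Lra Lia Psatz.
Open Scope R_scope.

Lemma Rabs_mult_eq_1 a d : a * d = 1 -> Rabs a * Rabs d = 1.
Proof. intro Had. rewrite <- Rabs_mult, Had. apply Rabs_R1. Qed.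

Fixpoint mpow (e : mat) (n : nat) : mat :=
  match n with O => mid | S n => mmul e (mpow e n) end.

Lemma mpow_upper a b d n : exists B, mpow (Mat a b 0 d) n = Mat (a ^ n) B 0 (d ^ n).
Proof.
  induction n as [|n [B HB]]; simpl.
  - exists 0. reflexivity.
  - rewrite HB. exists (a * B + b * d ^ n). unfold mmul; simpl. f_equal; ring.
Qed.

Lemma snd_act_upper A B D : A * D = 1 -> snd (act (Mat A B 0 D) ipt) = A ^ 2.
Proof.
  intro HAD. assert (HD : D <> 0) by (intro H; rewrite H in HAD; lra).
  replace A with (/ D) by (field_simplify_eq; lra).
  unfold act, ipt, mdet; simpl. field. exact HD.
Qed.

Lemma conj_translation_upper A B D t : A * D = 1 ->
  mmul (minv (Mat A B 0 D)) (mmul (Mat 1 t 0 1) (Mat A B 0 D)) = Mat 1 (t * D ^ 2) 0 1.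
Proof. intro HAD. unfold mmul, minv; simpl. f_equal; nra. Qed.

Section Subgroup.

Variable G : mat -> Prop.
Hypothesis HG : SL2_preimage_subgroup G.

Lemma subgroup_mid : G mid.
Proof. apply HG. Qed.

Lemma subgroup_det g : G g -> mdet g = 1.
Proof. apply HG. Qed.

Lemma subgroup_mul g h : G g -> G h -> G (mmul g h).
Proof. apply HG. Qed.

Lemma subgroup_inv g : G g -> G (minv g).
Proof. apply HG. Qed.

Lemma subgroup_neg g : G g -> G (mneg g).
Proof. apply HG. Qed.

Lemma subgroup_upper_det a b d : G (Mat a b 0 d) -> a * d = 1.
Proof.
  intro Hg. pose proof (subgroup_det _ Hg) as Hdet.
  unfold mdet in Hdet; simpl in Hdet; lra.
Qed.

Lemma subgroup_mpow e n : G e -> G (mpow e n).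
Proof.
  intro He. induction n as [|n IH]; simpl.
  - exact subgroup_mid.
  - exact (subgroup_mul _ _ He IH).
Qed.

Lemma limit_set_Inf_of_expanding a b d :
  G (Mat a b 0 d) -> 1 < Rabs a -> limit_set G Inf.
Proof.
  intros He Ha. pose proof (subgroup_upper_det _ _ _ He) as Had.
  exists (mpow (Mat a b 0 d)). split; [intro n; exact (subgroup_mpow _ n He)|].
  intro M.
  assert (Ha2 : Rabs (a ^ 2) > 1).
  { rewrite <- RPow_abs. pose proof (Rabs_pos a). simpl. nra. }
  destruct (Pow_x_infinity _ Ha2 (Rabs M + 1)) as [N HN].
  exists N. intros n Hn. specialize (HN n Hn).
  destruct (mpow_upper a b d n) as [B ->].
  rewrite snd_act_upper by (rewrite <- Rpow_mult_distr, Had; apply pow1).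
  replace ((a ^ n) ^ 2) with ((a ^ 2) ^ n) by (rewrite <- !pow_mult; f_equal; lia).
  rewrite Rabs_right in HN by (apply Rle_ge, pow_le, pow2_ge_0).
  pose proof (Rle_abs M). pose proof (Rabs_pos M).
  pose proof (pow2_ge_0 (fst (act (Mat (a ^ n) B 0 (d ^ n)) ipt))).
  set (X := (a ^ 2) ^ n) in *. nra.
Qed.

Lemma parabolic_fixing_Inf_translation :
  parabolic_fixed_point G Inf -> exists t, t <> 0 /\ G (Mat 1 t 0 1).
Proof.
  intros [[pa pb pc pd] [Hp [[Hp1 [Hp2 Htr]] Hfix]]]; simpl in *. subst pc.
  pose proof (subgroup_upper_det _ _ _ Hp) as Hpd.
  destruct (Rcase_abs (pa + pd)) as [Hneg|Hpos].
  - rewrite Rabs_left in Htr by lra.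
    assert (pa = -1) by nra. assert (pd = -1) by nra. subst.
    exists (- pb). split.
    + intro H0. apply Hp2. unfold mneg, mid; simpl. f_equal; lra.
    + pose proof (subgroup_neg _ Hp) as H; unfold mneg in H; simpl in H.
      replace (Mat 1 (- pb) 0 1) with (Mat (- -1) (- pb) (- 0) (- -1)) by (f_equal; lra).
      exact H.
  - rewrite Rabs_right in Htr by lra.
    assert (pa = 1) by nra. assert (pd = 1) by nra. subst.
    exists pb. split; [|exact Hp].
    intro H0. apply Hp1. subst. reflexivity.
Qed.

End Subgroup.

Lemma discrete_translation G : discrete G ->
  exists eps, 0 < eps /\ forall s, G (Mat 1 s 0 1) -> Rabs s < eps -> s = 0.
Proof.
  intros [eps [Heps Hdisc]]. exists eps. split; [exact Heps|].
  intros s Hs Hsmall. simpl in Hdisc.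
  assert (Hs0 := Hdisc _ Hs). simpl in Hs0.
  rewrite Rminus_diag, Rabs_R0 in Hs0.
  specialize (Hs0 Heps Hsmall Heps Heps). unfold mid in Hs0. injection Hs0 as Hs0. exact Hs0.
Qed.

Lemma translation_trivial_of_contracting G a b d t :
  Fuchsian G -> G (Mat a b 0 d) -> Rabs d < 1 -> G (Mat 1 t 0 1) -> t = 0.
Proof.
  intros [HG Hdisc] He Hd Ht.
  pose proof (subgroup_upper_det G HG _ _ _ He) as Had.
  assert (Hd0 : d <> 0) by (intro H; rewrite H in Had; lra).
  destruct (Req_dec t 0) as [|Ht0]; [assumption|exfalso].
  destruct (discrete_translation G Hdisc) as [eps [Heps Htriv]].
  assert (Hd2 : Rabs (d ^ 2) < 1).
  { rewrite <- RPow_abs. pose proof (Rabs_pos d). simpl. nra. }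
  pose proof (Rabs_pos_lt t Ht0) as Htp.
  destruct (pow_lt_1_zero _ Hd2 (eps / Rabs t)) as [N HN]; [apply Rdiv_lt_0_compat; lra|].
  specialize (HN N (le_n N)).
  destruct (mpow_upper a b d N) as [B HB].
  assert (HAD : a ^ N * d ^ N = 1) by (rewrite <- Rpow_mult_distr, Had; apply pow1).
  assert (Hconj : G (Mat 1 (t * (d ^ 2) ^ N) 0 1)).
  { replace ((d ^ 2) ^ N) with ((d ^ N) ^ 2) by (rewrite <- !pow_mult; f_equal; lia).
    rewrite <- (conj_translation_upper _ B _ t HAD), <- HB.
    pose proof (subgroup_mpow G HG _ N He) as HeN.
    apply (subgroup_mul G HG); [exact (subgroup_inv G HG _ HeN)|].
    exact (subgroup_mul G HG _ _ Ht HeN). }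
  apply (pow_nonzero (d ^ 2) N); [apply pow_nonzero; exact Hd0|].
  apply (Rmult_eq_reg_l t); [|exact Ht0]. rewrite Rmult_0_r.
  apply (Htriv _ Hconj). rewrite Rabs_mult.
  apply (Rmult_lt_compat_l (Rabs t)) in HN; [|exact Htp].
  replace (Rabs t * (eps / Rabs t)) with eps in HN by (field; lra). exact HN.
Qed.

Lemma Rst_Inf_of_expanding G a b d :
  Fuchsian G -> G (Mat a b 0 d) -> 1 < Rabs a -> Rst G Inf.
Proof.
  intros HF He Ha. pose proof (proj1 HF) as HG.
  split; [exact (limit_set_Inf_of_expanding G HG _ _ _ He Ha)|].
  intro Hpar. destruct (parabolic_fixing_Inf_translation G HG Hpar) as [t [Ht0 Ht]].
  apply Ht0. apply (translation_trivial_of_contracting G a b d t HF He); [|exact Ht].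
  pose proof (Rabs_mult_eq_1 _ _ (subgroup_upper_det G HG _ _ _ He)).
  pose proof (Rabs_pos d). nra.
Qed.

Lemma Inf_stabilizer_unimodular G f :
  Fuchsian G -> ~ Rst G Inf -> G f -> mc f = 0 -> Rabs (md f) = 1.
Proof.
  intros HF Hst Hf Hfc. destruct f as [a b c d]; simpl in *; subst c.
  pose proof (subgroup_upper_det G (proj1 HF) _ _ _ Hf) as Had.
  destruct (Rtotal_order (Rabs d) 1) as [Hlt|[Heq|Hgt]]; [exfalso|exact Heq|exfalso];
    apply Hst.
  - apply (Rst_Inf_of_expanding G a b d HF Hf).
    pose proof (Rabs_mult_eq_1 _ _ Had).
    pose proof (Rabs_pos d). nra.
  - apply (Rst_Inf_of_expanding G d (- b) a HF); [|exact Hgt].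
    replace (Mat d (- b) 0 a) with (minv (Mat a b 0 d)) by (unfold minv; simpl; f_equal; ring).
    exact (subgroup_inv G (proj1 HF) _ Hf).
Qed.

Lemma isom_center_eq_cross g h : mc g <> 0 -> mc h <> 0 ->
  isom_center g = isom_center h -> md g * mc h = md h * mc g.
Proof.
  intros Hg Hh Hcen.
  replace (md g) with (- isom_center g * mc g) by (unfold isom_center; field; exact Hg).
  replace (md h) with (- isom_center h * mc h) by (unfold isom_center; field; exact Hh).
  rewrite Hcen. ring.
Qed.

Theorem lemma2p1 (G : mat -> Prop) :
  Fuchsian G -> geometrically_finite G -> ~ Rst G Inf ->
  forall g h : mat, G g -> G h -> ~ fixes g Inf -> ~ fixes h Inf ->
  isom_center g = isom_center h ->
  isom_sphere g = isom_sphere h.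
Proof.
  intros HF _ Hst g h Hg Hh Hgc Hhc Hcen. simpl in Hgc, Hhc.
  pose proof (proj1 HF) as HG.
  set (f := mmul h (minv g)).
  pose proof (isom_center_eq_cross g h Hgc Hhc Hcen) as Hcross.
  pose proof (subgroup_det G HG g Hg) as Hdet. unfold mdet in Hdet.
  assert (Hfc : mc f = 0) by (unfold f, mmul, minv; simpl; lra).
  assert (Hch : mc h = md f * mc g).
  { unfold f, mmul, minv; simpl.
    transitivity (mc h * (ma g * md g - mb g * mc g) + ma g * (md h * mc g - md g * mc h)).
    - rewrite Hdet, Hcross. ring.
    - ring. }
  assert (Hf1 : Rabs (md f) = 1).
  { apply (Inf_stabilizer_unimodular G f HF Hst); [|exact Hfc].
    exact (subgroup_mul G HG _ _ Hh (subgroup_inv G HG _ Hg)). }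
  unfold isom_sphere. rewrite Hcen, Hch, Rabs_mult, Hf1, Rmult_1_l. reflexivity.
Qed.
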